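(* Let $\phi:\mathbb{R}\to\mathbb{R}^{+}$ be continuous and, for $x\in\mathbb{R}^m$, let $\Phi(x)_k=\phi(x_k)/\sum_{j=1}^m\phi(x_j)$. Let $\mathcal{X}\subset\mathbb{R}^d$ be a compact input feature space, and for each $n$ let $X^{(n)}=(x^{(n)}_1,\dots,x^{(n)}_n)\in\mathcal{X}^n$ be input features for $n$ items. Let $Q^{(n)}=\gamma(x^{(n)}_1,\dots,x^{(n)}_n)\in\mathbb{R}^{n\times d}$ and $K^{(n)}=\kappa(x^{(n)}_1,\dots,x^{(n)}_n)\in\mathbb{R}^{n\times d}$, where $\gamma,\kappa:\mathcal{X}^n\to\mathbb{R}^{n\times d}$ are continuous maps, each expressible as a composition of $L$ layers $g_L\circ f_L\circ\cdots\circ g_1\circ f_1$ (with $L$ and the layer maps not depending on $n$), where each $f_i$ is a feedforward component acting tokenwise, $f_i(z_1,\dots,z_n)_k=f_i(z_k)$, and each $g_i$ is a self $\Phi$-normalized attentional component $g_i(z_1,\dots,z_n)_k=\sum_{1\le l\le n}\alpha_{lk}v_i(z_l)$, where $v_i$ is a feedforward network and $\alpha_{lk}\in[0,1]$ are $\Phi$-normalized attention coefficients. Let $e^{(n)}_{ij}=q^{(n)}_i(k^{(n)}_j)^T$, where $q^{(n)}_i,k^{(n)}_j$ are the $i$-th row of $Q^{(n)}$ and $j$-th row of $K^{(n)}$. Then for any $\epsilon>0$ there exists $n\in\mathbb{N}$ such that for every query index $i$, $\Phi(e^{(n)}_{i,\cdot})_k<\epsilon$ for all $1\le k\le n$; that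 is, the $\Phi$-normalized attention coefficients disperse.
   Context: $\Phi$-normalized attention coefficients: for tokens $z_1,\dots,z_n$, $\alpha_{lk}=\phi(\psi_q(z)_k\psi_k(z)_l^T)/\sum_{j=1}^n\phi(\psi_q(z)_k\psi_k(z)_j^T)$, where $\psi_q,\psi_k$ are continuous query/key maps and $\phi:\mathbb{R}\to\mathbb{R}^+$ is continuous. Feedforward components and networks are continuous maps $\mathbb{R}^d\to\mathbb{R}^d$. *)

From Stdlib Require Lists.List.
From HB Require Import structures.
From mathcomp Require Import all_boot all_order all_algebra.
From mathcomp Require Import all_classical all_reals all_analysis.
Set Implicit Arguments. Unset Strict Implicit. Unset Printing Implicit Defensive.
Import Order.TTheory GRing.Theory Num.Theory.
Import numFieldNormedType.Exports.
Local Open Scope ring_scope.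

Definition dotv (R : realType) (d : nat) (x y : 'rV[R]_d) : R := (x *m y^T) 0 0.

Definition Phi (R : realType) (phi : R -> R) (n : nat) (x : 'I_n -> R) (k : 'I_n) : R :=
  phi (x k) / \sum_(j < n) phi (x j).

(* One layer g_i o f_i : a tokenwise feedforward component f_i followed by a
   self Phi-normalized attentional component with tokenwise query/key maps
   psi_q, psi_k and value feedforward network v_i. *)
Record layer (R : realType) (d : nat) := Layer {
  lay_f : 'rV[R]_d -> 'rV[R]_d;
  lay_psiq : 'rV[R]_d -> 'rV[R]_d;
  lay_psik : 'rV[R]_d -> 'rV[R]_d;
  lay_v : 'rV[R]_d -> 'rV[R]_d }.

Definition layer_continuous (R : realType) (d : nat) (L : layer R d) : Prop :=
  [/\ continuous (lay_f L), continuous (lay_psiq L),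
      continuous (lay_psik L) & continuous (lay_v L)].

Definition ffwd (R : realType) (d : nat) (L : layer R d) (n : nat)
  (z : 'I_n -> 'rV[R]_d) : 'I_n -> 'rV[R]_d := fun k => lay_f L (z k).

Definition alpha (R : realType) (phi : R -> R) (d : nat) (L : layer R d) (n : nat)
  (z : 'I_n -> 'rV[R]_d) (l k : 'I_n) : R :=
  Phi phi (fun j => dotv (lay_psiq L (z k)) (lay_psik L (z j))) l.

Definition attn (R : realType) (phi : R -> R) (d : nat) (L : layer R d) (n : nat)
  (z : 'I_n -> 'rV[R]_d) : 'I_n -> 'rV[R]_d :=
  fun k => \sum_(l < n) alpha phi L z l k *: lay_v L (z l).

Definition apply_layer (R : realType) (phi : R -> R) (d : nat) (L : layer R d) (n : nat)
  (z : 'I_n -> 'rV[R]_d) : 'I_n -> 'rV[R]_d := attn phi L (ffwd L z).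

(* g_L o f_L o ... o g_1 o f_1, with the list [:: L_1; ...; L_L] applied left to right *)
Definition apply_stack (R : realType) (phi : R -> R) (d : nat) (Ls : seq (layer R d))
  (n : nat) (z : 'I_n -> 'rV[R]_d) : 'I_n -> 'rV[R]_d :=
  foldl (fun z' L => apply_layer phi L z') z Ls.

(** Every layer maps tokens drawn from a compact set to tokens of norm at most
    some B independent of n: the feedforward maps are continuous on compact
    sets, and attention forms convex combinations of values.  Hence all
    queries and keys lie in a fixed ball, so all scores [e_ij] lie in a fixed
    interval [[-C, C]] on which the positive continuous [phi] is bounded below
    by some [m > 0] and above by some [M].  Then
    [Phi(e_i.)_k <= M / (n m)], which tends to [0]. *)

From HB Require Import structures.
From mathcomp Require Import all_boot all_order all_algebra.
From mathcomp Require Import all_classical all_reals all_analysis.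
From mathcomp Require Import lra.
Import Order.TTheory GRing.Theory Num.Theory.
Import numFieldNormedType.Exports.
Local Open Scope ring_scope.
Local Open Scope classical_set_scope.

Lemma compact_norm_le {R : realType} {V : normedModType R} {A : set V} :
  compact A -> exists2 B : R, 0 < B & forall y, A y -> `|y| <= B.
Proof.
move=> /compact_bounded [M [Mreal HM]].
exists (Num.max M 0 + 1) => [|y Ay]; first by rewrite ltr_pwDr // le_max lexx orbT.
by apply: HM Ay; rewrite ltr_pwDr // le_max lexx.
Qed.

Lemma compact_norm_ball {R : realType} (d : nat) {B : R} : 0 < B ->
  compact [set y : 'rV[R]_d | `|y| <= B].
Proof.
move=> B0.
have -> : [set y : 'rV[R]_d | `|y| <= B] = closed_ball 0 B.
  by rewrite closed_ballE // /closed_ball_; apply/seteqP; split => y /=;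
    rewrite sub0r normrN.
apply: bounded_closed_compact; last exact: closed_ball_closed.
exists B; split; first by rewrite num_real.
move=> r Br y; rewrite closed_ballE // /closed_ball_ /= sub0r normrN => yB.
exact: le_trans yB (ltW Br).
Qed.

Lemma norm_convex_comb_le (R : realType) (V : normedModType R) (n : nat)
    (w : 'I_n -> R) (v : 'I_n -> V) (B : R) :
  (forall l, 0 <= w l) -> \sum_l w l = 1 -> (forall l, `|v l| <= B) ->
  `|\sum_l w l *: v l| <= B.
Proof.
move=> w_ge0 w_sum1 vB.
apply: le_trans (ler_norm_sum _ _ _) _.
apply: (@le_trans _ _ (\sum_l w l * B)).
  by apply: ler_sum => l _; rewrite normrZ ger0_norm // ler_wpM2l.
by rewrite -mulr_suml w_sum1 mul1r.
Qed.

(* The norm of ['rV_d] is the maximum of the absolute values of the entries. *)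
Lemma norm_dotv_le (R : realType) (d : nat) (x y : 'rV[R]_d) (a b : R) :
  `|x| <= a -> `|y| <= b -> `|dotv x y| <= d%:R * (a * b).
Proof.
have entry_le (z : 'rV[R]_d) j : `|z 0 j| <= `|z|.
  by rewrite [leRHS]/Num.norm /= mx_normrE; apply/bigmax_geP; right; exists (0, j).
move=> xa yb.
have -> : dotv x y = \sum_(j < d) x 0 j * y 0 j.
  by rewrite /dotv !mxE; apply: eq_bigr => j _; rewrite mxE.
apply: le_trans (ler_norm_sum _ _ _) _.
apply: (@le_trans _ _ (\sum_(j < d) a * b)).
  apply: ler_sum => j _; rewrite normrM.
  by apply: ler_pM => //; apply: le_trans (entry_le _ _) _.
by rewrite sumr_const card_ord mulr_natl.
Qed.

Section PhiNormalization.

Context {R : realType} {phi : R -> R}.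
Hypothesis phi_pos : forall t, 0 < phi t.

Lemma Phi_denom_gt0 {n : nat} (x : 'I_n -> R) (k : 'I_n) :
  0 < \sum_(j < n) phi (x j).
Proof.
rewrite (bigD1 k) //= ltr_pwDl //.
by apply: sumr_ge0 => j _; apply: ltW.
Qed.

Lemma Phi_ge0 {n : nat} (x : 'I_n -> R) (k : 'I_n) : 0 <= Phi phi x k.
Proof. by rewrite divr_ge0 // ltW // Phi_denom_gt0. Qed.

Lemma Phi_sum1 {n : nat} (x : 'I_n -> R) (k : 'I_n) : \sum_l Phi phi x l = 1.
Proof. by rewrite -mulr_suml divff // lt0r_neq0 // (Phi_denom_gt0 x k). Qed.

Lemma Phi_le_div {n : nat} (x : 'I_n -> R) (k : 'I_n) {m M : R} : 0 < m ->
  (forall j, m <= phi (x j)) -> phi (x k) <= M ->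
  Phi phi x k <= M / (n%:R * m).
Proof.
move=> m_gt0 m_le le_M.
have nm_le : n%:R * m <= \sum_(j < n) phi (x j).
  by rewrite -[n in n%:R]card_ord mulr_natl -sumr_const ler_sum.
have n_gt0 : (0 < n)%N := leq_ltn_trans (leq0n k) (ltn_ord k).
apply: ler_pM le_M _; [exact: ltW | by rewrite invr_ge0 ltW ?Phi_denom_gt0 |].
by rewrite lef_pV2 ?posrE ?Phi_denom_gt0 ?mulr_gt0 ?ltr0n.
Qed.

Lemma Phi_disperse {C eps : R} : continuous phi -> 0 <= C -> 0 < eps ->
  exists N : nat, forall n, (N <= n)%N ->
    forall (x : 'I_n -> R), (forall j, `|x j| <= C) ->
    forall k, Phi phi x k < eps.
Proof.
move=> phi_cont C_ge0 eps_gt0.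
have CC : - C <= C by lra.
have [cm _ phi_min] := EVT_min CC (continuous_subspaceT phi_cont).
have [cM _ phi_max] := EVT_max CC (continuous_subspaceT phi_cont).
have m_gt0 := phi_pos cm.
exists (Num.truncn (phi cM / (eps * phi cm))).+1 => n Nn x xC k.
have x_in j : x j \in `[- C, C]%R by rewrite in_itv /= -ler_norml.
have Phi_le := Phi_le_div x k m_gt0 (fun j => phi_min _ (x_in j)) (phi_max _ (x_in k)).
apply: le_lt_trans Phi_le _.
rewrite ltr_pdivrMr ?mulr_gt0 ?ltr0n ?(leq_trans _ Nn) //.
rewrite mulrCA -ltr_pdivrMr ?mulr_gt0 //.
by apply: lt_le_trans (truncnS_gt _) _; rewrite ler_nat.
Qed.

Lemma apply_layer_bounded {d : nat} {L : layer R d} {A : set 'rV[R]_d} :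
  layer_continuous L -> compact A ->
  exists2 B : R, 0 < B & forall n (z : 'I_n -> 'rV[R]_d), (forall i, A (z i)) ->
    forall k, `|apply_layer phi L z k| <= B.
Proof.
case=> f_cont _ _ v_cont A_compact.
have fA_compact : compact (lay_f L @` A).
  by apply: continuous_compact => //; exact: continuous_subspaceT.
have vfA_compact : compact (lay_v L @` (lay_f L @` A)).
  by apply: continuous_compact => //; exact: continuous_subspaceT.
have [B B_gt0 vfA_B] := compact_norm_le vfA_compact.
exists B => // n z zA k.
apply: norm_convex_comb_le => [l||l]; [exact: Phi_ge0 | exact: Phi_sum1 |].
by apply: vfA_B; exists (lay_f L (z l)) => //; exists (z l).
Qed.

Lemma apply_stack_bounded {d : nat} {Ls : seq (layer R d)} {A : set 'rV[R]_d} :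
  (forall L, List.In L Ls -> layer_continuous L) -> compact A ->
  exists2 B : R, 0 < B & forall n (z : 'I_n -> 'rV[R]_d), (forall i, A (z i)) ->
    forall k, `|apply_stack phi Ls z k| <= B.
Proof.
elim: Ls A => [|L Ls IH] A Ls_cont A_compact.
  have [B B_gt0 AB] := compact_norm_le A_compact.
  by exists B => // n z zA k; apply: AB.
have [B1 B1_gt0 LB1] := apply_layer_bounded (Ls_cont L (or_introl erefl)) A_compact.
have [B B_gt0 LsB] := IH _ (fun L' h => Ls_cont L' (or_intror h))
                          (compact_norm_ball d B1_gt0).
by exists B => // n z zA; apply: LsB => i; apply: LB1.
Qed.

End PhiNormalization.

Theorem theorem1 (R : realType) (d : nat) (phi : R -> R)
  (phi_cont : continuous phi) (phi_pos : forall x, 0 < phi x)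
  (X : set 'rV[R]_d) (X_compact : compact X)
  (Xs : forall n : nat, 'I_n -> 'rV[R]_d) (Xs_in : forall n (i : 'I_n), X (Xs n i))
  (Gam Kap : seq (layer R d))
  (Gam_cont : forall L, List.In L Gam -> layer_continuous L)
  (Kap_cont : forall L, List.In L Kap -> layer_continuous L) :
  forall eps : R, 0 < eps ->
  exists N : nat, forall n : nat, (N <= n)%N ->
    forall i k : 'I_n,
      Phi phi (fun j => dotv (apply_stack phi Gam (Xs n) i)
                             (apply_stack phi Kap (Xs n) j)) k < eps.
Proof.
move=> eps eps_gt0.
have [Bq Bq_gt0 QB] := apply_stack_bounded phi_pos Gam_cont X_compact.
have [Bk Bk_gt0 KB] := apply_stack_bounded phi_pos Kap_cont X_compact.
have C_ge0 : 0 <= d%:R * (Bq * Bk) by rewrite !mulr_ge0 // ltW.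
have [N disperse] := Phi_disperse phi_pos phi_cont C_ge0 eps_gt0.
exists N => n Nn i; apply: disperse => // j.
by apply: norm_dotv_le; [apply: QB | apply: KB].
Qed.
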